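(* Let $\gamma>1$, $f\in L^\infty(0,1)$, and let $u$ satisfy the ordinary differential equation \[ x_n\,\partial_n^2u+\gamma\,\partial_nu=f\quad\text{on }(0,1). \] If $x_n\partial_nu\in L^\infty(0,1)$, then $u\in W^{2,\infty}_*(0,1)$ and \[ \|\partial_nu\|_{L^\infty}\le\frac1\gamma\|f\|_{L^\infty},\qquad \|x_n\partial_n^2u\|_{L^\infty}\le 2\|f\|_{L^\infty}. \]
   Context: $x_n\in(0,1)$ is the variable and $\partial_n=d/dx_n$. $W^{2,\infty}_*(0,1)=\{u:\ \partial_nu\in L^\infty(0,1),\ x_n\partial_n^2u\in L^\infty(0,1)\}/\mathbb R$ with norm $\|\partial_nu\|_{L^\infty}+\|x_n\partial_n^2u\|_{L^\infty}$. *)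

From HB Require Import structures.
From mathcomp Require Import all_boot all_order all_algebra.
From mathcomp Require Import all_classical all_reals all_analysis.
Set Implicit Arguments. Unset Strict Implicit. Unset Printing Implicit Defensive.
Import Order.TTheory GRing.Theory Num.Theory.
Import numFieldNormedType.Exports.
Local Open Scope classical_set_scope.
Local Open Scope ring_scope.

Definition ae01 (R : realType) (P : R -> Prop) : Prop :=
  {ae (@lebesgue_measure R), forall x : R, 0 < x < 1 -> P x}.

Definition Linf01 (R : realType) (f : R -> R) : Prop :=
  measurable_fun (`]0, 1[ : set R) f /\ exists M : R, ae01 (fun x => `|f x| <= M).

(* u in W^{2,1}_loc(0,1) with first derivative g = d_n u and second
   (weak) derivative h = d_n^2 u:  u is differentiable on (0,1) with
   derivative g, and g is locally absolutely continuous on (0,1) with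
   density h, i.e. h is integrable on every [a,b] in (0,1) and
   g b - g a = \int_a^b h. *)
Definition W21loc_derivs (R : realType) (u g h : R -> R) : Prop :=
  (forall x : R, 0 < x < 1 -> is_derive x 1 u (g x)) /\
  (forall a b : R, 0 < a -> a <= b -> b < 1 ->
     (@lebesgue_measure R).-integrable (`[a, b] : set R) (EFin \o h) /\
     g b - g a = Rintegral (@lebesgue_measure R) (`[a, b] : set R) h).

Definition W2inf_star (R : realType) (u g h : R -> R) : Prop :=
  W21loc_derivs u g h /\ Linf01 g /\ Linf01 (fun x => x * h x).

(* Put T = M / gamma.  The equation gives x g' <= gamma (T - g) almost
   everywhere, so g is nonincreasing wherever g >= T; by continuity, as soon
   as g x0 > T we get g >= g x0 on (0, x0].  Fix s in (1/gamma, 1).  Comparing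
   g at b and at s b shows that b (g b - T) is multiplied by at least
   s (1 + gamma (1 - s)) > 1 at each step b -> s b, so x g would be unbounded
   near 0, contradicting x g in L^infty.  Hence g <= T, and likewise -g <= T;
   finally |x g'| <= |f| + gamma |g| <= 2 M.  This is a discrete form of the
   monotonicity of x^gamma (g - T), which avoids real powers. *)

From HB Require Import structures.
From mathcomp Require Import all_boot all_order all_algebra.
From mathcomp Require Import all_classical all_reals all_analysis.
From mathcomp Require Import ring lra measurable_realfun.
Set Implicit Arguments. Unset Strict Implicit. Unset Printing Implicit Defensive.
Import Order.TTheory GRing.Theory Num.Theory.
Import numFieldNormedType.Exports.
Local Open Scope classical_set_scope.
Local Open Scope ring_scope.

Section almost_everywhere_on_01.
Context {R : realType}.
Notation mu := (@lebesgue_measure R).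

Lemma ae01W (P : R -> Prop) : (forall x, 0 < x < 1 -> P x) -> ae01 P.
Proof. by move=> P01; apply: aeW. Qed.

Lemma ae01S (P Q : R -> Prop) :
  ae01 P -> (forall x, 0 < x < 1 -> P x -> Q x) -> ae01 Q.
Proof.
move=> + PQ; rewrite /ae01; apply: filterS; first exact: (ae_filter_ringOfSetsType mu).
by move=> x Px x01; exact/PQ/Px.
Qed.

Lemma ae01S2 (P Q S : R -> Prop) :
  ae01 P -> ae01 Q -> (forall x, 0 < x < 1 -> P x -> Q x -> S x) -> ae01 S.
Proof.
move=> + + PQS; rewrite /ae01; apply: filterS2; first exact: (ae_filter_ringOfSetsType mu).
by move=> x Px Qx x01; exact: PQS (Px x01) (Qx x01).
Qed.

Lemma ae01_exists_itv (P : R -> Prop) (a b : R) :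
  ae01 P -> 0 <= a -> a < b -> b <= 1 -> exists x, a < x < b /\ P x.
Proof.
move=> [N [mN N0 notPN]] a0 ab b1; apply: contrapT => noP.
have : (mu `]a, b[ <= mu N)%E.
  apply: le_measure; rewrite ?inE //= => x /=; rewrite in_itv /= => axb.
  apply: notPN => /= Px; apply: noP; exists x; split => //.
  by apply: Px; case/andP: axb => ax xb; apply/andP; split; lra.
by rewrite N0 lebesgue_measure_itv /= lte_fin ab -EFinD lee_fin; lra.
Qed.

End almost_everywhere_on_01.

Lemma ae_le_Rintegral d (T : measurableType d) (R : realType)
    (mu : {measure set T -> \bar R}) (D : set T) (f1 f2 : T -> R) :
  measurable D -> mu.-integrable D (EFin \o f1) -> mu.-integrable D (EFin \o f2) ->
  {ae mu, forall x, D x -> f1 x <= f2 x} ->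
  \int[mu]_(x in D) f1 x <= \int[mu]_(x in D) f2 x.
Proof.
move=> mD i1 i2 [N [mN N0 f12N]].
have mDN : measurable (D `\` N) by exact: measurableD.
have restrict f : mu.-integrable D (EFin \o f) ->
    \int[mu]_(x in D) f x = \int[mu]_(x in D `\` N) f x.
  by move=> fi; rewrite /Rintegral (negligible_integral mN mD fi N0).
rewrite (restrict _ i1) (restrict _ i2).
have DNsub : D `\` N `<=` D by move=> x [].
apply: le_Rintegral => //; [exact: integrableS i1|exact: integrableS i2|].
move=> x [Dx Nx]; rewrite leNgt; apply/negP => f21.
by apply: Nx; apply: f12N => /(_ Dx); rewrite leNgt f21.
Qed.

Section local_primitive.
Context {R : realType}.
Notation mu := (@lebesgue_measure R).

Definition local_primitive01 (h g : R -> R) : Prop :=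
  forall a b : R, 0 < a -> a <= b -> b < 1 ->
    mu.-integrable `[a, b] (EFin \o h) /\ g b - g a = \int[mu]_(x in `[a, b]) h x.

Lemma local_primitive01N (h g : R -> R) :
  local_primitive01 h g -> local_primitive01 (fun x => - h x) (fun x => - g x).
Proof.
move=> hg a b a0 ab b1; have [ih E] := hg a b a0 ab b1.
split; first exact: integrableN ih.
rewrite /= opprK addrC -opprB E -mulN1r -(RintegralZl _ _ ih) //.
by apply: eq_Rintegral => x _; rewrite mulN1r.
Qed.

Lemma local_primitive01_continuous (h g : R -> R) : local_primitive01 h g ->
  forall x : R, 0 < x < 1 -> {for x, continuous g}.
Proof.
move=> hg x /andP[x0 x1].
pose a := x / 2; pose b := (x + 1) / 2.
have a0 : 0 < a by rewrite /a; lra.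
have ab : a < b by rewrite /a /b; lra.
have b1 : b < 1 by rewrite /b; lra.
have xab : x \in `]a, b[ by rewrite in_itv /= /a /b; apply/andP; split; lra.
have [iab _] := hg a b a0 (ltW ab) b1.
have F_cont := within_continuous_continuous ab
  (parameterized_integral_continuous (ltW ab) iab) xab.
have g_near : \forall t \near x, g a + parameterized_integral mu a t h = g t.
  near=> t; have : t \in `]a, b[ by near: t; exact: near_in_itvoo.
  rewrite in_itv /= => /andP[a_t tb].
  have [_ E] := hg a t a0 (ltW a_t) (lt_trans tb b1).
  by rewrite /parameterized_integral -E addrC subrK.
apply: cvg_trans (near_eq_cvg g_near) _; rewrite -(nbhs_singleton g_near).
exact: cvgD (cvg_cst _) F_cont.
Unshelve. all: by end_near.
Qed.

Lemma measurable_fun_itvoo01 (h : R -> R) :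
  (forall a b : R, 0 < a -> a <= b -> b < 1 -> mu.-integrable `[a, b] (EFin \o h)) ->
  measurable_fun (`]0, 1[ : set R) h.
Proof.
move=> hi; rewrite itv_open_bnd_bigcup.
apply/measurable_fun_bigcup => [n|n]; first exact: measurable_itv.
rewrite itv_bnd_open_bigcup.
apply/measurable_fun_bigcup => [m|m]; first exact: measurable_itv.
set a := 0 + _; set b := 1 - _.
have a0 : 0 < a by rewrite /a add0r invr_gt0 ltr0n.
have b1 : b < 1 by rewrite /b ltrBlDr ltrDl invr_gt0 ltr0n.
have [ab|ba] := leP a b; last first.
  by rewrite set_itv_ge ?bnd_simp -?ltNge //; exact: measurable_fun_set0.
by apply/measurable_EFinP; apply: measurable_int (hi a b a0 ab b1).
Qed.

End local_primitive.

Lemma continuous_ge_right_end (R : realType) (G : R -> R) (a b m : R) :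
  m < G b -> (forall x, a <= x <= b -> {for x, continuous G}) ->
  (forall s, a <= s <= b -> (forall y, s <= y <= b -> m <= G y) -> G b <= G s) ->
  forall s, a <= s <= b -> G b <= G s.
Proof.
move=> mGb G_cont right_seg s sab; apply: (right_seg) => // y /andP[sy yb].
have {s sab sy} ay : a <= y by case/andP: sab => a_s _; lra.
rewrite leNgt; apply/negP => Gym.
pose S := [set z | a <= z <= b /\ G z < m].
have supS : has_sup S by split; [exists y; split => //; apply/andP | exists b => z [/andP[]]].
have Sq z : S z -> z <= sup S by exact: sup_upper_bound.
have Sy : S y by split => //; apply/andP.
have aq : a <= sup S by apply: le_trans (Sq y Sy).
have qb : sup S <= b by apply: ge_sup => [|z [/andP[]]]; first by exists y.
have G_right t : sup S < t <= b -> G b <= G t.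
  move=> /andP[qt tb]; apply: right_seg; first by apply/andP; split; lra.
  move=> z /andP[tz zb]; rewrite leNgt; apply/negP => Gzm.
  have /Sq : S z by split=> //; apply/andP; split; lra.
  lra.
(* G (sup S) <= m + e from the left, G (sup S) >= G b - e from the right *)
pose e := (G b - m) / 2; have e0 : 0 < e by rewrite /e; lra.
have qab : a <= sup S <= b by apply/andP.
have /cvgrPdist_lt/(_ e e0)/nbhs_ballP[d d0 near_q] := G_cont _ qab.
have {}d0 : 0 < d := d0.
have [z Sz qz] := sup_adherent d0 supS.
have /near_q /= /ltr_normlP[_ Gqz] : ball (sup S) d z.
  by rewrite /ball /= ger0_norm ?subr_ge0 ?Sq //; lra.
have [_ Gzm] := Sz.
have [t [qt tqd Gbt]] : exists t, [/\ sup S <= t, t <= sup S + d / 2 & G b <= G t].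
  have [qdb|bqd] := leP (sup S + d / 2) b; last by exists b; split; lra.
  by exists (sup S + d / 2); split; [lra | lra | apply: G_right; apply/andP; split; lra].
have /near_q /= /ltr_normlP[Gqt _] : ball (sup S) d t.
  by rewrite /ball /= ler0_norm; lra.
rewrite /e in Gqz Gqt; lra.
Qed.

Lemma geometric_growth_unbounded (R : archiRealFieldType) (rho B : R) (phi : nat -> R) :
  1 < rho -> 0 < phi 0%N -> (forall k, rho * phi k <= phi k.+1) ->
  exists k, B < phi k.
Proof.
move=> rho1 phi0 grow; pose c := (rho - 1) * phi 0%N.
have c0 : 0 < c by rewrite /c; nra.
have linear k : phi 0%N + k%:R * c <= phi k.
  elim: k => [|k IH]; first by rewrite mul0r addr0.
  have k0 : 0 <= k%:R * c by rewrite mulr_ge0 // ltW.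
  have := grow k; rewrite -natr1 /c in IH k0 *; nra.
exists (Num.truncn ((B - phi 0%N) / c)).+1.
apply: lt_le_trans (linear _); rewrite -ltrBlDl -ltr_pdivrMr //.
exact: truncnS_gt.
Qed.

Section one_sided_bound.
Context {R : realType}.
Notation mu := (@lebesgue_measure R).
Variables (gamma T K : R) (G H : R -> R).
Hypothesis gamma_gt1 : 1 < gamma.
Hypothesis GH : local_primitive01 H G.
Hypothesis xH_le : ae01 (fun x => x * H x <= gamma * (T - G x)).
Hypothesis xG_bounded : ae01 (fun x => `|x * G x| <= K).

Lemma increment_le (a b m : R) : 0 < a -> a <= b -> b < 1 -> T <= m ->
  (forall s, a <= s <= b -> m <= G s) ->
  b * (G b - G a) <= gamma * (T - m) * (b - a).
Proof.
move=> a0 ab b1 Tm mG; have [iH ->] := GH a0 ab b1.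
have b0 : 0 < b by lra.
have gamma0 : 0 < gamma by move: gamma_gt1; lra.
pose k := gamma * (T - m) / b.
have -> : gamma * (T - m) * (b - a) = b * (k * (b - a)) by rewrite /k; field; lra.
rewrite ler_pM2l //.
have -> : k * (b - a) = \int[mu]_(x in `[a, b]) cst k x.
  rewrite Rintegral_cst //; congr (_ * _).
  have := lebesgue_measure_itv `[a, b]; rewrite /= lte_fin.
  by case: ltgtP ab => // [_ _ ->|-> _ ->]; rewrite /= ?subrr // -EFinD.
apply: ae_le_Rintegral => //.
  apply: continuous_compact_integrable; first exact: segment_compact.
  by apply: continuous_subspaceT => x; exact: cst_continuous.
have := xH_le; rewrite /ae01; apply: filterS; first exact: (ae_filter_ringOfSetsType mu).
move=> x xH /=; rewrite in_itv /= => /andP[ax xb].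
have {}xH : x * H x <= gamma * (T - G x) by apply: xH; apply/andP; split; lra.
have mGx : m <= G x by apply: mG; apply/andP.
have Tm0 : gamma * (T - m) <= 0 by nra.
have Hx0 : H x <= 0 by nra.
rewrite /k ler_pdivlMr //; nra.
Qed.

Lemma G_le_leftward (a x0 : R) : 0 < a <= x0 -> x0 < 1 -> T < G x0 -> G x0 <= G a.
Proof.
move=> /andP[a0 ax0] x01 TG; apply: (continuous_ge_right_end (a := a) TG).
- by move=> x /andP[ax xx0]; apply: (local_primitive01_continuous GH); apply/andP; split; lra.
- move=> s /andP[a_s sx0] TGs.
  have := increment_le (lt_le_trans a0 a_s) sx0 x01 (lexx T) TGs.
  by rewrite subrr mulr0 mul0r pmulr_rle0 ?subr_le0 //; lra.
- by apply/andP; split.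
Qed.

Lemma shrink_step (s b : R) : 0 < s < 1 -> 0 < b < 1 -> T < G b ->
  (1 + gamma * (1 - s)) * (G b - T) <= G (s * b) - T.
Proof.
move=> /andP[s0 s1] /andP[b0 b1] TG.
have sb0 : 0 < s * b by rewrite mulr_gt0.
have sbb : s * b <= b by rewrite ger_pMl //; lra.
have Gb_le y : s * b <= y <= b -> G b <= G y.
  by move=> /andP[sby yb]; apply: G_le_leftward => //; apply/andP; split; lra.
have := increment_le sb0 sbb b1 (ltW TG) Gb_le.
rewrite (_ : _ * (b - s * b) = b * (gamma * (T - G b) * (1 - s))); last by ring.
rewrite ler_pM2l //; nra.
Qed.

Lemma shrink_gt (s b : R) : 0 < s < 1 -> 0 < b < 1 -> T < G b -> T < G (s * b).
Proof.
move=> s01 b01 TG; have := shrink_step s01 b01 TG.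
have GbT : 0 <= G b - T by rewrite subr_ge0 ltW.
have : 1 <= 1 + gamma * (1 - s) by have := gamma_gt1; case/andP: s01; nra.
by move=> /(ler_peMl GbT); lra.
Qed.

Lemma shrink_weighted_ge (s b : R) : 0 < s < 1 -> 0 < b < 1 -> T < G b ->
  s * (1 + gamma * (1 - s)) * (b * (G b - T)) <= s * b * (G (s * b) - T).
Proof.
move=> s01 b01 TG; have sb0 : 0 < s * b.
  by apply: mulr_gt0; [case/andP: s01 | case/andP: b01].
rewrite (_ : _ * (_ * _) = s * b * ((1 + gamma * (1 - s)) * (G b - T))); last by ring.
by rewrite ler_pM2l //; exact: shrink_step.
Qed.

Lemma shrink_weighted_le (s b : R) : 0 < s < 1 -> 0 < b < 1 -> T < G b ->
  s * b * (G b - T) <= K + `|T|.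
Proof.
move=> /andP[s0 s1] /andP[b0 b1] TG.
have [|||y [/andP[sby yb] /ler_normlP[_ yGy]]] := ae01_exists_itv (a := s * b) (b := b) xG_bounded.
- by rewrite mulr_ge0 // ltW.
- by rewrite gtr_pMl //; lra.
- exact: ltW.
have GbGy : G b <= G y by apply: G_le_leftward => //; apply/andP; split; nra.
have yT : - `|T| <= y * T.
  by apply: lerNnormlW; rewrite normrM ger0_norm ?ler_piMl //; nra.
have : s * b * (G b - T) <= y * (G y - T).
  apply: le_trans (_ : y * (G b - T) <= _).
    by rewrite ler_pM2r ?subr_gt0 // ltW.
  by rewrite ler_pM2l; [lra | nra].
lra.
Qed.

Lemma G_le (x : R) : 0 < x < 1 -> G x <= T.
Proof.
move=> x01; rewrite leNgt; apply/negP => TGx; have g1 := gamma_gt1.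
(* any s in (1/gamma, 1) works: s (1 + gamma (1 - s)) - 1 = (1 - s) (gamma s - 1) *)
pose s := (1 + gamma^-1) / 2.
have gV : gamma * gamma^-1 = 1 by rewrite divff //; lra.
have gV1 : 0 < gamma^-1 < 1 by rewrite invr_gt0 invf_lt1; lra.
have s01 : 0 < s < 1 by rewrite /s; lra.
have rho1 : 1 < s * (1 + gamma * (1 - s)) by rewrite /s; nra.
pose b k := s ^+ k * x.
have bS k : b k.+1 = s * b k by rewrite /b exprS mulrA.
have b01 k : 0 < b k < 1.
  have : 0 < s ^+ k <= 1 by rewrite exprn_gt0 ?exprn_ile1; lra.
  by rewrite /b; nra.
have TGb k : T < G (b k).
  by elim: k => [|k IH]; [rewrite /b mul1r | rewrite bS shrink_gt].
pose phi k := b k * (G (b k) - T).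
have [||k] := @geometric_growth_unbounded _ _ ((K + `|T|) / s) phi rho1.
- by apply: mulr_gt0; [case/andP: (b01 0%N) | rewrite subr_gt0].
- by move=> k; rewrite /phi bS shrink_weighted_ge.
rewrite ltr_pdivrMr; last lra.
by rewrite /phi mulrC mulrA ltNge shrink_weighted_le.
Qed.

End one_sided_bound.

Lemma euler_ode_bound (R : realType) (gamma M K : R) (g h : R -> R) :
  1 < gamma -> local_primitive01 h g ->
  ae01 (fun x => `|x * h x + gamma * g x| <= M) ->
  ae01 (fun x => `|x * g x| <= K) ->
  forall x, 0 < x < 1 -> `|g x| <= M / gamma.
Proof.
move=> g1 hg hgM xgK x x01.
have MgT : gamma * (M / gamma) = M by rewrite mulrC divfK //; lra.
apply/ler_normlP; split; last first.
  apply: (G_le g1 hg _ xgK x01); apply: (ae01S hgM) => y _ /ler_normlP[_]; lra.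
suff : - g x <= M / gamma by lra.
apply: (G_le (K := K) g1 (local_primitive01N hg) _ _ x01).
- by apply: (ae01S hgM) => y _ /ler_normlP[+ _]; lra.
- by apply: (ae01S xgK) => y _ /=; rewrite mulrN normrN.
Qed.

Theorem lemma5p9 (R : realType) (gamma : R) (u g h f : R -> R) :
  1 < gamma ->
  Linf01 f ->
  W21loc_derivs u g h ->
  ae01 (fun x => x * h x + gamma * g x = f x) ->
  Linf01 (fun x => x * g x) ->
  W2inf_star u g h /\
  (forall M : R, ae01 (fun x => `|f x| <= M) ->
     ae01 (fun x => `|g x| <= M / gamma) /\
     ae01 (fun x => `|x * h x| <= 2 * M)).
Proof.
move=> g1 [_ [M0 fM0]] uW21 ode [_ [K xgK]]; have [_ hg] := uW21.
have g_le M : ae01 (fun x => `|f x| <= M) -> forall x, 0 < x < 1 -> `|g x| <= M / gamma.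
  by move=> fM; apply: (euler_ode_bound g1 hg _ xgK); apply: (ae01S2 ode fM) => y _ ->.
have xh_le M : ae01 (fun x => `|f x| <= M) -> ae01 (fun x => `|x * h x| <= 2 * M).
  move=> fM; apply: (ae01S2 ode fM) => x x01 E fxM; have gxM := g_le M fM x x01.
  have -> : x * h x = f x - gamma * g x by rewrite -E addrK.
  apply: le_trans (ler_normB _ _) _; rewrite normrM gtr0_norm; last lra.
  by move: gxM; rewrite ler_pdivlMr; lra.
split=> [|M fM]; last by split; [exact: ae01W (g_le M fM) | exact: xh_le].
split; first by []; split; split.
- apply: open_continuous_measurable_fun; first exact: interval_open.
  by move=> x; rewrite inE /= in_itv /=; exact: local_primitive01_continuous hg x.
- by exists (M0 / gamma); exact: ae01W (g_le M0 fM0).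
- apply: measurable_funM; first exact: measurable_id.
  by apply: measurable_fun_itvoo01 => a b a0 ab b1; case: (hg a b a0 ab b1).
- by exists (2 * M0); exact: xh_le.
Qed.
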